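(* Let $\mathcal{A}$ be a unital $\mathbb{F}$-algebra with $\dim\mathcal{A}=n>4$, let $S$ be a generating set of $\mathcal{A}$, and let $(m_0,m_1,\ldots,m_{n-1})$ be the characteristic sequence of $S$. If $h\in\{4,\ldots,n-1\}$ and $m_h>2^{h-2}$, then $m_h=2^{h-2}+2^{q}$ for some $q\in\{0,\ldots,h-2\}$.
   Context: All algebras are finite-dimensional, unital, not necessarily associative algebras over a field $\mathbb{F}$. For a finite generating set $S$ of $\mathcal{A}$, a word in $S$ is any product (with any bracketing) of finitely many elements of $S$; its length is the number of factors, and $1$ is a word of length $0$. $L_i(S)$ is the linear span of all words in $S$ of length at most $i$ (so $L_0(S)=\mathbb{F}$). The characteristic sequence of $S$ is the non-decreasing sequence of non-negative integers $(m_0,\ldots,m_{n-1})$ constructed as follows: $m_0=0$; with $s_1=\dim L_1(S)-1$, set $m_1=\cdots=m_{s_1}=1$; inductively, if $m_1,\ldots,m_r$ are defined using $L_1(S),\ldots,L_{k-1}(S)$, put $s_k=\dim L_k(S)-\dim L_{k-1}(S)$ and set $m_{r+1}=\cdots=m_{r+s_k}=k$. (Thus each $k\ge1$ occurs exactly $\dim L_k(S)-\dim L_{k-1}(S)$ times, and the sequence has $n=\dim\mathcal{A}$ terms.) *)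

From HB Require Import structures.
From mathcomp Require Import all_boot all_order all_algebra.
Set Implicit Arguments. Unset Strict Implicit. Unset Printing Implicit Defensive.
Import GRing.Theory.
Local Open Scope ring_scope.

(* A finite-dimensional, unital, not necessarily associative algebra over a
   field F is modelled as a finite-dimensional F-vector space V (vectType)
   together with a bilinear multiplication [mul] and a two-sided unit [one]. *)
Definition is_unital_algebra (F : fieldType) (V : vectType F)
    (mul : V -> V -> V) (one : V) : Prop :=
  [/\ (forall (a : F) (x y z : V), mul (a *: x + y) z = a *: mul x z + mul y z),
      (forall (a : F) (x y z : V), mul x (a *: y + z) = a *: mul x y + mul x z),
      (forall x : V, mul one x = x) &
      (forall x : V, mul x one = x)].

Fixpoint words_aux (F : fieldType) (V : vectType F) (mul : V -> V -> V)
    (one : V) (S : seq V) (fuel k : nat) {struct fuel} : seq V :=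
  match fuel with
  | 0%N => [::]
  | fuel'.+1 =>
    match k with
    | 0%N => [:: one]
    | 1%N => S
    | _ => flatten [seq [seq mul u v | u <- words_aux mul one S fuel' i,
                                        v <- words_aux mul one S fuel' (k - i)]
                   | i <- iota 1 k.-1]
    end
  end.

Definition words (F : fieldType) (V : vectType F) (mul : V -> V -> V)
    (one : V) (S : seq V) (k : nat) : seq V := words_aux mul one S k.+1 k.

Definition Lspace (F : fieldType) (V : vectType F) (mul : V -> V -> V)
    (one : V) (S : seq V) (i : nat) : {vspace V} :=
  <<flatten [seq words mul one S k | k <- iota 0 i.+1]>>%VS.

Definition generates (F : fieldType) (V : vectType F) (mul : V -> V -> V)
    (one : V) (S : seq V) : Prop :=
  exists i, Lspace mul one S i = fullv.

(* [charseq_at mul one S h k] : the h-th term m_h of the characteristic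
   sequence of S equals k.  Each k >= 1 occupies the indices
   dim L_{k-1} .. dim L_k - 1, and m_0 = 0 (dim L_0 = 1); hence m_h is the
   least k with h < dim L_k(S). *)
Definition charseq_at (F : fieldType) (V : vectType F) (mul : V -> V -> V)
    (one : V) (S : seq V) (h k : nat) : Prop :=
  (h < \dim (Lspace mul one S k))%N /\
  (forall j, (j < k)%N -> (\dim (Lspace mul one S j) <= h)%N).

(* Call k >= 1 a jump if dim L_k > dim L_(k-1); the positive values of the
   characteristic sequence are exactly the jumps, and m_h is the jump at which
   dim L first exceeds h.
   A word of length k is a product of words of lengths i and k - i, so if for every
   0 < i < k one of i, k - i is not a jump, then L_k = L_(k-1): every jump k >= 2 is
   the sum of two smaller jumps.  For a set K of positive integers with this property, an element of rank r
   in K is at most 2^(r-1), and if it exceeds 2^(r-2) it equals 2^(r-2) + 2^q: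
   writing it as x + y with y <= x, the summand x has rank r - 1, and induction on
   x and y leaves only sums of this shape.  Since dim L_0 = 1 and every jump before
   m_h adds a dimension, m_h has rank at most h, which forces the claim. *)

From mathcomp Require Import all_boot all_order all_algebra.
From mathcomp Require Import zify.
Set Implicit Arguments. Unset Strict Implicit. Unset Printing Implicit Defensive.
Import GRing.Theory.

Lemma leq_double_pow2_pred a b : 0 < a -> a < b -> 2 * 2 ^ a.-1 <= 2 ^ b.-1.
Proof. by move=> a_gt0 ab; rewrite -expnS leq_exp2l //; lia. Qed.

Lemma pow2_sum4_gt t a b : a <= t -> b <= t ->
  2 ^ t.+2 < 2 ^ t.+1 + 2 ^ a + (2 ^ t + 2 ^ b) -> a = t \/ b = t.
Proof.
move=> a_le b_le sum_gt.
have [a_lt|] := ltnP a t; last by left; lia.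
have [b_lt|] := ltnP b t; last by right; lia.
case: t a_lt b_lt {a_le b_le} sum_gt => // t a_lt b_lt.
have := leq_pexp2l (isT : 0 < 2) a_lt; have := leq_pexp2l (isT : 0 < 2) b_lt.
rewrite !expnS; lia.
Qed.

Section SumClosedSet.

Variable K : pred nat.
Hypothesis K0 : ~~ K 0.
Hypothesis K_split : forall k, K k -> 1 < k -> exists2 i, 0 < i < k & K i && K (k - i).

Lemma K_gt0 k : K k -> 0 < k.
Proof. by case: k => // K0k; case/negP: K0. Qed.

Definition rank k := count K (iota 1 k).

Lemma rankS k : rank k.+1 = rank k + K k.+1.
Proof. by rewrite /rank -[k.+1]addn1 iotaD count_cat /= addn0 add1n addn1. Qed.

Lemma rank_mono : {homo rank : x y / x <= y}.
Proof.
move=> x y; elim: y => [|y IH]; first by rewrite leqn0 => /eqP->.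
by rewrite leq_eqVlt ltnS => /predU1P[->//|/IH]; rewrite rankS; lia.
Qed.

Lemma rank_lt x y : x < y -> K y -> rank x < rank y.
Proof. by case: y => // y; rewrite ltnS rankS => /rank_mono + ->; lia. Qed.

Lemma rank_gt0 k : K k -> 0 < rank k.
Proof. by case: k => [|k Kk]; [rewrite (negbTE K0) | exact: rank_lt (ltn0Sn k) Kk]. Qed.

Lemma leq_of_rank x y : K y -> rank y <= rank x -> y <= x.
Proof. by move=> Ky; apply: contra_leq => /rank_lt->. Qed.

Lemma rank_inj : {in K &, injective rank}.
Proof.
move=> x y Kx Ky rxy; apply/eqP; rewrite eqn_leq.
by rewrite (leq_of_rank Kx) ?(leq_of_rank Ky) ?rxy.
Qed.

Lemma K_split_le k : K k -> 1 < k ->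
  exists x y, [/\ K x, K y, 0 < y <= x & k = x + y].
Proof.
move=> Kk k_gt1; have [i /andP[i_gt0 ik] /andP[Ki Kki]] := K_split Kk k_gt1.
case: (leqP (k - i) i) => [ki_le|ki_gt].
  by exists i, (k - i); split => //; lia.
by exists (k - i), i; split => //; lia.
Qed.

Lemma le_pow2_rank k : K k -> k <= 2 ^ (rank k).-1.
Proof.
elim/ltn_ind: k => k IH Kk; case: (leqP k 1) => [k_le1|k_gt1].
  by apply: leq_trans k_le1 _; rewrite expn_gt0.
have [x [y [Kx Ky /andP[y_gt0 yx] k_xy]]] := K_split_le Kk k_gt1.
have xk : x < k by lia.
have yk : y < k by lia.
have := leq_double_pow2_pred (rank_gt0 Kx) (rank_lt xk Kk).
have := leq_double_pow2_pred (rank_gt0 Ky) (rank_lt yk Kk).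
have := IH x xk Kx; have := IH y yk Ky; lia.
Qed.

Lemma pow2_rank_below k : K k -> k = 2 ^ (rank k).-1 ->
  forall z, K z -> z <= k -> z = 2 ^ (rank z).-1.
Proof.
elim/ltn_ind: k => k IH Kk k_pow z Kz; rewrite leq_eqVlt => /predU1P[->//|zk].
have k_gt1 : 1 < k by have := K_gt0 Kz; lia.
have [x [y [Kx Ky /andP[y_gt0 yx] k_xy]]] := K_split_le Kk k_gt1.
have xk : x < k by lia.
have yk : y < k by lia.
have rxk := rank_lt xk Kk; have ryk := rank_lt yk Kk.
have hx := le_pow2_rank Kx; have hy := le_pow2_rank Ky.
have hx' := leq_double_pow2_pred (rank_gt0 Kx) rxk.
have hy' := leq_double_pow2_pred (rank_gt0 Ky) ryk.
have rk_gt1 : 1 < rank k by have := rank_gt0 Kx; lia.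
have e_rk : (rank k).-1 = (rank k).-2.+1 by lia.
rewrite e_rk expnS in k_pow hx' hy'.
have /eqP : 2 ^ (rank x).-1 = 2 ^ (rank k).-2 by lia.
rewrite eqn_exp2l // => /eqP rx.
apply: (IH x xk Kx _ z Kz); first by rewrite rx; lia.
apply: leq_of_rank => //; have := rank_lt zk Kk; have := rank_gt0 Kx; lia.
Qed.

Lemma rank_large_summand k x y : K k -> K x -> K y -> y <= x -> k = x + y ->
  2 ^ (rank k).-2 < k -> (rank k).-2 = (rank x).-1.
Proof.
move=> Kk Kx Ky yx k_xy k_gt.
have xk : x < k by have := K_gt0 Ky; lia.
have rxk := rank_lt xk Kk; have rx_gt0 := rank_gt0 Kx.
have [rx_lt|] := ltnP (rank x) (rank k).-1; last by lia.
by have := leq_double_pow2_pred rx_gt0 rx_lt; have := le_pow2_rank Kx; lia.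
Qed.

Lemma pow2_tight_add x y : K x -> K y -> y <= x -> x = 2 ^ (rank x).-1 ->
  exists2 q, q <= (rank x).-1 & x + y = 2 ^ (rank x).-1 + 2 ^ q.
Proof.
move=> Kx Ky yx x_pow; exists (rank y).-1; first by have := rank_mono yx; lia.
by rewrite -x_pow -(pow2_rank_below Kx x_pow Ky yx).
Qed.

Lemma pow2_loose_add x y a : K x -> K y -> y <= x ->
  a < (rank x).-2 -> x = 2 ^ (rank x).-2 + 2 ^ a -> 2 ^ (rank x).-1 < x + y ->
  (2 ^ (rank y).-2 < y -> exists2 b, b <= (rank y).-2 & y = 2 ^ (rank y).-2 + 2 ^ b) ->
  exists2 q, q <= (rank x).-1 & x + y = 2 ^ (rank x).-1 + 2 ^ q.
Proof.
move=> Kx Ky yx a_lt x_eq sum_gt IHy.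
have [u rx] : exists u, rank x = u.+3 by exists (rank x - 3); lia.
rewrite rx /= ltnS in a_lt x_eq sum_gt *.
have := leq_pexp2l (isT : 0 < 2) a_lt; rewrite !expnS in x_eq sum_gt * => a_pow.
have ryx := rank_mono yx; have ry_gt0 := rank_gt0 Ky.
have ry_ge : u.+2 <= rank y.
  rewrite leqNgt; apply/negP => lt.
  by have := leq_double_pow2_pred ry_gt0 lt; have := le_pow2_rank Ky; rewrite /= expnS; lia.
have [ry_lt|ry_eq] := ltnP (rank y) u.+3; last first.
  have y_x : y = x by apply: rank_inj => //; lia.
  by exists a.+1; [lia | rewrite expnS; lia].
have ry : rank y = u.+2 by lia.
have [b b_le y_eq] : exists2 b, b <= u & y = 2 ^ u + 2 ^ b.
  by move: IHy; rewrite ry /=; apply; lia.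
have [a_u|b_u] : a = u \/ b = u by apply: pow2_sum4_gt => //; rewrite !expnS; lia.
- by exists b; [lia | rewrite a_u in x_eq; lia].
- by exists a; [lia | rewrite b_u in y_eq; lia].
Qed.

Lemma pow2_rank_split k : K k -> 2 ^ (rank k).-2 < k ->
  exists2 q, q <= (rank k).-2 & k = 2 ^ (rank k).-2 + 2 ^ q.
Proof.
elim/ltn_ind: k => k IH Kk k_gt.
have k_gt1 : 1 < k by apply: leq_ltn_trans k_gt; rewrite expn_gt0.
have [x [y [Kx Ky /andP[y_gt0 yx] k_xy]]] := K_split_le Kk k_gt1.
have xk : x < k by lia.
have yk : y < k by lia.
have rx := rank_large_summand Kk Kx Ky yx k_xy k_gt.
rewrite rx k_xy in k_gt *.
have := le_pow2_rank Kx; rewrite leq_eqVlt => /predU1P[x_pow|x_lt].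
  exact: pow2_tight_add.
have [r rx2] : exists r, rank x = r.+2.
  by case: (rank x) x_lt => [|[|r]] /=; [rewrite expn0; lia | rewrite expn0; lia | exists r].
have x_gt : 2 ^ (rank x).-2 < x by move: k_gt; rewrite rx2 /= expnS; lia.
have [a a_le x_eq] := IH x xk Kx x_gt.
apply: (pow2_loose_add Kx Ky yx _ x_eq k_gt (IH y yk Ky)).
move: a_le x_lt; rewrite rx2 /= expnS {1}x_eq rx2 /= leq_eqVlt => /predU1P[->|//]; lia.
Qed.

Lemma pow2_rank_le_split h k : K k -> rank k <= h -> 2 ^ (h - 2) < k ->
  exists2 q, q <= h - 2 & k = 2 ^ (h - 2) + 2 ^ q.
Proof.
move=> Kk rk_le k_gt; have rk_gt0 := rank_gt0 Kk.
have rk_h : (rank k).-2 = h - 2.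
  suff: h <= rank k by lia.
  rewrite leqNgt; apply/negP => rk_lt.
  have rk_pred : (rank k).-1 <= h - 2 by lia.
  by have := leq_pexp2l (isT : 0 < 2) rk_pred; have := le_pow2_rank Kk; lia.
by rewrite -rk_h; apply: pow2_rank_split; rewrite ?rk_h.
Qed.

End SumClosedSet.

Section UnitalAlgebra.

Variables (F : fieldType) (V : vectType F) (mul : V -> V -> V) (one : V) (S : seq V).
Hypothesis mul_alg : is_unital_algebra mul one.

Local Notation W := (words mul one S).
Local Notation L := (Lspace mul one S).

Local Open Scope ring_scope.

Lemma mulDl x y z : mul (x + y) z = mul x z + mul y z.
Proof. by case: mul_alg => linl _ _ _; rewrite -[x]scale1r linl !scale1r. Qed.

Lemma mulDr x y z : mul x (y + z) = mul x y + mul x z.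
Proof. by case: mul_alg => _ linr _ _; rewrite -[y]scale1r linr !scale1r. Qed.

Lemma mul0l z : mul 0 z = 0.
Proof. by apply: (addrI (mul 0 z)); rewrite -mulDl !addr0. Qed.

Lemma mul0r x : mul x 0 = 0.
Proof. by apply: (addrI (mul x 0)); rewrite -mulDr !addr0. Qed.

Lemma mulZl a x z : mul (a *: x) z = a *: mul x z.
Proof. by case: mul_alg => linl _ _ _; rewrite -[a *: x]addr0 linl mul0l addr0. Qed.

Lemma mulZr a x y : mul x (a *: y) = a *: mul x y.
Proof. by case: mul_alg => _ linr _ _; rewrite -[a *: y]addr0 linr mul0r addr0. Qed.

Lemma mul_span_memv (X Y : seq V) (U : {vspace V}) u v :
  u \in <<X>>%VS -> v \in <<Y>>%VS -> {in X & Y, forall a b, mul a b \in U} ->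
  mul u v \in U.
Proof.
move=> /(@coord_span _ _ _ (in_tuple X)) -> /(@coord_span _ _ _ (in_tuple Y)) -> XY_U.
rewrite (big_morph (mul^~ _) (fun x y => mulDl x y _) (mul0l _)) memv_suml // => i _.
rewrite mulZl memvZ // (big_morph (mul _) (mulDr _) (mul0r _)) memv_suml // => j _.
by rewrite mulZr memvZ // XY_U ?mem_nth.
Qed.

Local Close Scope ring_scope.

Lemma words_aux_fuel f g k : k < f -> k < g ->
  words_aux mul one S f k = words_aux mul one S g k.
Proof.
elim: f g k => [|f IH] [|g] k //=; case: k => [|[|k]] // kf kg.
congr flatten; apply/eq_in_map => i; rewrite mem_iota => /andP[i_gt0 ik].
by rewrite (IH g i) ?(IH g (k.+2 - i)) //; lia.
Qed.

Lemma words0 : W 0 = [:: one].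
Proof. by []. Qed.

Lemma words_auxS f k : words_aux mul one S f.+1 k.+2 =
  flatten [seq [seq mul u v | u <- words_aux mul one S f i,
                              v <- words_aux mul one S f (k.+2 - i)] | i <- iota 1 k.+1].
Proof. by []. Qed.

Lemma wordsE k : 1 < k ->
  W k = flatten [seq [seq mul u v | u <- W i, v <- W (k - i)] | i <- iota 1 k.-1].
Proof.
case: k => [|[|k]] // _; rewrite {1}/words words_auxS.
congr flatten; apply/eq_in_map => i; rewrite mem_iota => /andP[i_gt0 ik].
have fuel_i : words_aux mul one S k.+2 i = W i by apply: words_aux_fuel; lia.
have fuel_ki : words_aux mul one S k.+2 (k.+2 - i) = W (k.+2 - i).
  by apply: words_aux_fuel; lia.
by rewrite fuel_i fuel_ki.
Qed.

Lemma mem_words_mul i j u v : 0 < i -> 0 < j -> u \in W i -> v \in W j ->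
  mul u v \in W (i + j).
Proof.
move=> i_gt0 j_gt0 uW vW; rewrite wordsE; last by lia.
apply/flattenP; exists [seq mul u v | u <- W i, v <- W (i + j - i)].
  by apply/mapP; exists i; rewrite // mem_iota; lia.
by rewrite addKn; apply: allpairs_f.
Qed.

Lemma mem_wordsP k x : 1 < k -> x \in W k ->
  exists i u v, [/\ 0 < i < k, u \in W i, v \in W (k - i) & x = mul u v].
Proof.
move=> k_gt1; rewrite wordsE // => /flattenP[s /mapP[i]].
rewrite mem_iota => ik -> /allpairsP[[u v] /= [uW vW ->]].
by exists i, u, v; split => //; lia.
Qed.

Lemma words_sub_Lspace i k : i <= k -> {subset W i <= L k}.
Proof.
move=> ik x xW; apply: memv_span; apply/flattenP; exists (W i) => //.
by apply/mapP; exists i; rewrite // mem_iota; lia.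
Qed.

Lemma mem_Lspace_gens k x : x \in flatten [seq W i | i <- iota 0 k.+1] ->
  exists2 i, i <= k & x \in W i.
Proof.
by move=> /flattenP[s /mapP[i]]; rewrite mem_iota => ik -> xW; exists i => //; lia.
Qed.

Lemma Lspace_mono : {homo L : i j / i <= j >-> (i <= j)%VS}.
Proof.
move=> i j ij; apply/span_subvP => x /mem_Lspace_gens[l li].
by apply: words_sub_Lspace; lia.
Qed.

Lemma Lspace_mul i j u v : u \in L i -> v \in L j -> mul u v \in L (i + j).
Proof.
move=> uL vL; apply: (mul_span_memv uL vL) => a b.
move=> /mem_Lspace_gens[i' i'i aW] /mem_Lspace_gens[j' j'j bW].
case: mul_alg => _ _ mul1x mulx1.
case: i' i'i aW => [_|i' i'i aW].
  by rewrite words0 inE => /eqP->; rewrite mul1x (words_sub_Lspace _ bW) //; lia.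
case: j' j'j bW => [_|j' j'j bW].
  by rewrite words0 inE => /eqP->; rewrite mulx1 (words_sub_Lspace _ aW) //; lia.
by apply: words_sub_Lspace (mem_words_mul _ _ aW bW) => //; lia.
Qed.

Definition jump k := \dim (L k.-1) < \dim (L k).

Lemma jump0 : ~~ jump 0.
Proof. by rewrite /jump ltnn. Qed.

Lemma Lspace_no_jump k : ~~ jump k -> L k = L k.-1.
Proof.
by rewrite -leqNgt => dimk; apply/eqP; rewrite eq_sym eqEdim Lspace_mono ?leq_pred.
Qed.

Lemma jump_split k : jump k -> 1 < k -> exists2 i, 0 < i < k & jump i && jump (k - i).
Proof.
move=> jk k_gt1.
have [/existsP[i /and3P[i_gt0 ji jki]]|/existsPn no_split] :=
  boolP [exists i : 'I_k, [&& 0 < i, jump i & jump (k - i)]].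
  by exists i; rewrite ?i_gt0 ?ltn_ord ?ji.
suff: (L k <= L k.-1)%VS by move/dimvS; rewrite leqNgt => /negP /(_ jk).
apply/span_subvP => x /mem_Lspace_gens[j jk' xW].
have [j_lt|j_ge] := ltnP j k; first by apply: words_sub_Lspace xW; lia.
have j_k : j = k by lia.
rewrite {}j_k in xW.
have [i [u [v [/andP[i_gt0 ik] uW vW ->]]]] := mem_wordsP k_gt1 xW.
have uL := words_sub_Lspace (leqnn i) uW; have vL := words_sub_Lspace (leqnn (k - i)) vW.
have := no_split (Ordinal ik); rewrite /= i_gt0 /= negb_and => /orP[] no_jump.
- rewrite Lspace_no_jump // in uL.
  by have := Lspace_mul uL vL; rewrite (_ : i.-1 + (k - i) = k.-1) //; lia.
- rewrite Lspace_no_jump // in vL.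
  by have := Lspace_mul uL vL; rewrite (_ : i + (k - i).-1 = k.-1) //; lia.
Qed.

Lemma Lspace0 : L 0 = <[one]>%VS.
Proof. by rewrite /Lspace /= span_seq1. Qed.

Lemma unit_neq0 : 0 < \dim {:V} -> one != 0%R.
Proof.
apply: contraTneq => one0; rewrite -leqNgt leqn0 dimv_eq0 -subv0.
case: mul_alg => _ _ mul1x _; apply/subvP => x _.
by rewrite memv0 -[x]mul1x one0 mul0l.
Qed.

Lemma dim_Lspace_rank k : 0 < \dim {:V} -> (rank jump k).+1 <= \dim (L k).
Proof.
move=> V_gt0; elim: k => [|k IH]; first by rewrite Lspace0 dim_vline unit_neq0.
rewrite rankS; move: IH (dimvS (Lspace_mono (leqnSn k))).
by rewrite /jump /=; case: ltnP; lia.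
Qed.

End UnitalAlgebra.

Theorem theorem4p2 (F : fieldType) (V : vectType F) (mul : V -> V -> V)
    (one : V) (S : seq V) (n h mh : nat) :
  is_unital_algebra mul one ->
  \dim (fullv : {vspace V}) = n ->
  (4 < n)%N ->
  generates mul one S ->
  (4 <= h)%N -> (h <= n - 1)%N ->
  charseq_at mul one S h mh ->
  (2 ^ (h - 2) < mh)%N ->
  exists q : nat, (q <= h - 2)%N /\ mh = (2 ^ (h - 2) + 2 ^ q)%N.
Proof.
move=> alg dimV n_gt4 _ _ _ [h_lt dim_le] mh_gt.
have V_gt0 : 0 < \dim {:V} by rewrite dimV; lia.
have mh_gt0 : 0 < mh by apply: leq_ltn_trans mh_gt.
have mh_pred : mh.-1 < mh by lia.
have jump_mh : jump mul one S mh by apply: leq_ltn_trans (dim_le _ mh_pred) h_lt.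
have rank_mh : rank (jump mul one S) mh <= h.
  have := dim_Lspace_rank S alg mh.-1 V_gt0; have := dim_le _ mh_pred.
  by have := @rankS (jump mul one S) mh.-1; rewrite prednK // jump_mh; lia.
have [q q_le mh_eq] :=
  pow2_rank_le_split (@jump0 _ _ mul one S) (jump_split alg) jump_mh rank_mh mh_gt.
by exists q.
Qed.
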